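(* Let $G$ be a finite simple graph containing at least one critical vertex. Let $a \geq 1$ and let $r_1, \ldots, r_a$ be positive integers with $1 + \sum_{i=1}^a r_i = \chi(G)$. Among all $(r_1, \ldots, r_a)$-partitioned colorings of $G$, choose one, $\pi = \{\{x\}, L_{11}, \ldots, L_{1r_1}, \ldots, L_{a1}, \ldots, L_{ar_a}\}$, minimizing \[\sum_{i=1}^a \left\| G\Big[\bigcup_{j=1}^{r_i} L_{ij}\Big] \right\|.\] Put $U_i = \bigcup_{j=1}^{r_i} L_{ij}$ and let $Z_i(x)$ be the connected component containing $x$ of $G[\{x\} \cup U_i]$. If $1 \leq i \leq a$ and $d_{Z_i(x)}(x) = r_i$, then $Z_i(x)$ is a complete graph if $r_i \geq 3$, and $Z_i(x)$ is an odd cycle if $r_i = 2$.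
   Context: A vertex $v$ of $G$ is critical if $\chi(G - v) < \chi(G)$. For a graph $H$, $\|H\|$ denotes the number of edges of $H$, and $d_H(v)$ the degree of $v$ in $H$. Given $a \geq 1$ and $r_1, \ldots, r_a$ with $1 + \sum_i r_i = \chi(G)$, an $(r_1, \ldots, r_a)$-partitioned coloring of $G$ is a proper coloring of $G$ with exactly $\chi(G)$ color classes, written in the form $\{\{x\}, L_{11}, \ldots, L_{1r_1}, L_{21}, \ldots, L_{2r_2}, \ldots, L_{a1}, \ldots, L_{ar_a}\}$, where $\{x\}$ is a singleton color class (for some vertex $x$) and each $L_{ij}$ is a color class. *)

(* A finite simple graph = symmetric irreflexive e : rel T, T : finType. *)
From mathcomp Require Import all_boot.
Set Implicit Arguments. Unset Strict Implicit. Unset Printing Implicit Defensive.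

Section Graphs.
Variables (T : finType) (e : rel T).

(* proper colouring of the induced subgraph G[S] with colours < k
   (values outside S are irrelevant; the codomain 'I_k.+1 just keeps the type
   inhabited when k = 0).  The test u != v is vacuous for loopless graphs. *)
Definition colorable_on (S : {set T}) (k : nat) : bool :=
  [exists f : {ffun T -> 'I_k.+1},
     [forall u in S, f u < k] &&
     [forall u in S, forall v in S, ((u != v) && e u v) ==> (f u != f v)]].

Lemma colorable_on_ex (S : {set T}) : exists k, colorable_on S k.
Proof.
have H (w : T) : (enum_rank w : nat) < #|T|.+1.
  move: (ltn_ord (enum_rank w)) => h; rewrite ltnS; exact: ltnW.
exists #|T|; apply/existsP.
exists [ffun u => inord (enum_rank u)]; apply/andP; split.
  by apply/forall_inP => u _; rewrite ffunE (inordK (H u)) ltn_ord.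
apply/forall_inP => u _; apply/forall_inP => v _; apply/implyP => /andP [uv _].
rewrite !ffunE; apply/negP => /eqP /(congr1 val).
rewrite /= (inordK (H u)) (inordK (H v)) => /val_inj /enum_rank_inj Euv.
by rewrite Euv eqxx in uv.
Qed.

Definition chi_on (S : {set T}) : nat := ex_minn (colorable_on_ex S).

Definition chi : nat := chi_on setT.

Definition critical (v : T) : Prop := chi_on (setT :\ v) < chi.

Definition nedges (U : {set T}) : nat :=
  #|[set E : {set T} | (E \subset U) &&
       [exists u, exists v, (E == [set u; v]) && (u != v) && e u v]]|.

(* vertex set of the connected component containing x of G[S] (x \in S assumed) *)
Definition component (x : T) (S : {set T}) : {set T} :=
  [set y | connect [rel u v | [&& u \in S, v \in S & e u v]] x y].

Definition deg_in (Z : {set T}) (x : T) : nat := #|[set y in Z | e x y]|.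

Definition complete_on (Z : {set T}) : Prop :=
  forall u v, u \in Z -> v \in Z -> u != v -> e u v.

Definition odd_cycle_on (Z : {set T}) : Prop :=
  exists s : seq T, [/\ uniq s, 3 <= size s, odd (size s), Z = [set x in s] &
    forall u v, u \in s -> v \in s ->
      e u v = (v == next s u) || (u == next s v)].

(* (r_1,...,r_a)-partitioned colouring: x is the singleton class (colour None);
   every other vertex v gets a colour Some (i, j) with i < a, j < r i, i.e. lies in
   class L_{i,j}; all classes L_{i,j} are nonempty (color classes); the colouring
   is proper. *)
Definition pcol (a : nat) (r : 'I_a -> nat) (x : T) (f : T -> option ('I_a * nat)) : Prop :=
  [/\ forall v, (f v == None) = (v == x),
      forall v i j, f v = Some (i, j) -> j < r i,
      forall (i : 'I_a) j, j < r i -> exists v, f v = Some (i, j) &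
      forall u v, e u v -> f u != f v].

Definition Upart (a : nat) (f : T -> option ('I_a * nat)) (i : 'I_a) : {set T} :=
  [set v | if f v is Some (i', _) then i' == i else false].

Definition pcost (a : nat) (f : T -> option ('I_a * nat)) : nat :=
  \sum_(i < a) nedges (Upart f i).

End Graphs.

(* Write W = {x} ∪ U_i and Z = Z_i(x).  The singleton x has a neighbour in every class
   L_{ij} (otherwise x could join that class and chi(G) - 1 colours would suffice), hence
   exactly one in each L_{ij} when d_Z(x) = r_i.  Exchanging x with such a neighbour v
   (v becomes the singleton, x takes over its class) yields another partitioned colouring
   whose cost differs by d_{U_i - v}(x) - d_{U_i - v}(v); minimality forces d_W(v) <= r_i.
   Walking along Z, every vertex of G[Z] has degree at most r_i.  Moreover G[Z] is not
   r_i-colourable: no vertex of Z has a neighbour in U_i \ Z, so such a colouring with the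
   colours of L_{i1}, ..., L_{ir_i} would again leave chi(G) - 1 colours.
   Finally the classes L_{ij} colour Z - x, and the Kempe chain argument from Lovasz's proof
   of Brooks' theorem shows that such a graph is K_{r+1} if r >= 3 and an odd cycle if
   r = 2: the uncoloured vertex t sees every colour exactly once and can be moved to any
   neighbour, so every two-coloured Kempe chain through t is a cycle, and swapping colours
   along Kempe chains shows that any two neighbours of t are adjacent. *)

From mathcomp Require Import all_boot zify.
Set Implicit Arguments. Unset Strict Implicit. Unset Printing Implicit Defensive.

Lemma prev_at_last (T : eqType) (y w : T) q : y \notin q -> prev_at y y w q = last w q.
Proof.
elim: q w => [|q1 q IH] w /=; first by rewrite eqxx.
by rewrite inE negb_or => /andP [/negbTE -> yq]; exact: IH.
Qed.

Lemma next_neq_prev (T : eqType) (s : seq T) y : uniq s -> 3 <= size s -> y \in s ->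
  next s y != prev s y.
Proof.
move=> us ss ys; case: (rot_to ys) => i s' E.
have us' : uniq (y :: s') by rewrite -E rot_uniq.
have ss' : 3 <= size (y :: s') by rewrite -E size_rot.
rewrite -(next_rot i us) -(prev_rot i us) E.
case: s' us' ss' {E} => [|w [|q1 q]] //= /andP [yn /andP [wn uq]] _.
rewrite eqxx; move: yn; rewrite !inE !negb_or => /and3P [yw yq1 yq].
rewrite (negbTE yw) (negbTE yq1) prev_at_last //.
by apply: contraTneq (mem_last q1 q) => <-.
Qed.

Lemma alternating_path_parity (T : eqType) (phi : T -> nat) u q :
  all (fun v => phi v < 2) (u :: q) -> path (fun v w => phi v != phi w) u q ->
  phi (last u q) = (phi u + size q) %% 2.
Proof.
elim: q u => [|w q IH] u /=; first by rewrite addn0 andbT => /modn_small.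
move=> /and3P [pu pw pq] /andP [puw pth]; rewrite IH /= ?pw //.
move: pu pw puw; case: (phi u) => [|[|]] //; case: (phi w) => [|[|]] //= _ _ _.
all: lia.
Qed.

Lemma connect_ind (T : finType) (R : rel T) (P : T -> Prop) x : P x ->
  (forall u v, P u -> R u v -> P v) -> forall y, connect R x y -> P y.
Proof.
move=> Px step y /connectP [p pth ->]; elim: p x Px pth => //= a p IH x Px /andP [Rxa pth].
exact: IH (step _ _ Px Rxa) pth.
Qed.

Lemma card_ge_cover (T : finType) (A : {set T}) (c : T -> nat) (s : seq nat) : uniq s ->
  (forall j, j \in s -> exists2 v, v \in A & c v = j) -> size s <= #|A|.
Proof.
move=> us H; rewrite cardE -(size_map c); apply: uniq_leq_size => // j /H [v vA <-].
by apply: map_f; rewrite mem_enum.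
Qed.

Lemma card_ge_colors (T : finType) (A : {set T}) (c : T -> nat) n :
  (forall j, j < n -> exists2 v, v \in A & c v = j) -> n <= #|A|.
Proof.
move=> H; rewrite -[n](size_iota 0); apply: (card_ge_cover (c := c)) (iota_uniq 0 n) _.
by move=> j; rewrite mem_iota add0n => /andP [_ /H].
Qed.

Lemma card2_mem (T : finType) (A : {set T}) x y z : #|A| = 2 -> x \in A -> y \in A -> x != y ->
  z \in A -> (z == x) || (z == y).
Proof.
move=> cA xA yA xy; have sub : [set x; y] \subset A.
  by apply/subsetP => w; rewrite !inE => /orP [] /eqP ->.
have cc : #|[set x; y]| = #|A| by rewrite cards2 xy cA.
by rewrite -(elimT (subset_cardP cc) sub) !inE.
Qed.

Lemma third_color (a b : nat) : a != b -> exists c, [/\ c < 3, a != c & b != c].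
Proof.
case: a => [|[|[|a]]]; case: b => [|[|[|b]]] //= _;
  first [by exists 0 | by exists 1 | by exists 2].
Qed.

Section Components.
Variables (T : finType) (e : rel T).
Hypothesis e_sym : symmetric e.
Hypothesis e_irr : irreflexive e.

Lemma component_self t (S : {set T}) : t \in component e t S.
Proof. by rewrite inE connect0. Qed.

Lemma component_sub t (S : {set T}) y : y \in component e t S -> y = t \/ y \in S.
Proof.
rewrite inE; apply: (connect_ind (P := fun y => y = t \/ y \in S)); first by left.
by move=> u v _ /= /and3P [_ ? _]; right.
Qed.

Lemma component_in t (S : {set T}) y : t \in S -> y \in component e t S -> y \in S.
Proof. by move=> tS /component_sub [->|]. Qed.

Lemma component_closed t (S : {set T}) u v : u \in component e t S -> u \in S -> v \in S ->
  e u v -> v \in component e t S.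
Proof.
rewrite !inE => cu uS vS euv; apply: connect_trans cu _; apply: connect1.
by rewrite /= uS vS euv.
Qed.

Lemma component_mono t (S S' : {set T}) : S \subset S' ->
  {subset component e t S <= component e t S'}.
Proof.
move=> sub y; rewrite !inE; apply: connect_sub => u v /= /and3P [uS vS euv].
by apply: connect1; rewrite /= (subsetP sub _ uS) (subsetP sub _ vS) euv.
Qed.

Lemma component_connected t (S : {set T}) y : t \in S ->
  y \in component e t S -> y \in component e t (component e t S).
Proof.
move=> tS; rewrite [y \in component e t S]inE.
apply: (connect_ind (P := fun y => y \in component e t (component e t S))).
  exact: component_self.
move=> u v uCC /= /and3P [uS vS euv]; have uC := component_in (component_self _ _) uCC.
exact: component_closed uCC uC (component_closed uC uS vS euv) euv.
Qed.

Lemma handshake (C : {set T}) : ~~ odd (\sum_(y in C) #|[set z in C | e y z]|).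
Proof.
move: {2}#|C| (erefl #|C|) => n; elim: n C => [|n IH] C cC.
  by move/eqP: cC; rewrite cards_eq0 => /eqP ->; rewrite big_set0.
have [y0 y0C] : exists y0, y0 \in C by apply/set0Pn; rewrite -card_gt0 cC.
rewrite (big_setD1 y0 y0C) /=.
have -> : \sum_(y in C :\ y0) #|[set z in C | e y z]| =
   \sum_(y in C :\ y0) (#|[set z in C :\ y0 | e y z]| + e y y0).
  apply: eq_bigr => y _; rewrite (cardsD1 y0) inE y0C /= addnC; congr (_ + _).
  by apply: eq_card => z; rewrite !inE andbA.
rewrite big_split /=.
have -> : \sum_(y in C :\ y0) (e y y0 : nat) = #|[set z in C | e y0 z]|.
  rewrite (cardsD1 y0) inE y0C e_irr /= add0n -sum1_card [RHS]big_mkcond [LHS]big_mkcond /=.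
  apply: eq_bigr => z _; rewrite !inE (e_sym z y0).
  by case: (z == y0) => //=; case: (z \in C) => //=; case: (e y0 z).
move: cC; rewrite (cardsD1 y0) y0C add1n => -[/IH].
by rewrite addnC -addnA addnn oddD odd_double addbF.
Qed.

(* Otherwise [p] would be the only vertex of odd degree in its component. *)
Lemma two_ends_connected (Q : {set T}) p q : p \in Q -> p != q ->
  (forall y, y \in component e p Q -> #|[set z in Q | e y z]| = 2 - ((y == p) + (y == q))) ->
  q \in component e p Q.
Proof.
move=> pQ pq H; apply/negPn/negP => qC.
set C := component e p Q in qC H.
have CQ : C \subset Q by apply/subsetP => y; exact: component_in.
have pC : p \in C by exact: component_self.
have closedC y z : y \in C -> z \in Q -> e y z -> z \in C.
  by move=> yC; exact: component_closed yC (subsetP CQ y yC).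
clearbody C; have := handshake C.
have -> : \sum_(y in C) #|[set z in C | e y z]| = \sum_(y in C) (2 - (y == p)).
  apply: eq_bigr => y yC.
  have yq : (y == q) = false by apply/eqP => E; rewrite -E yC in qC.
  transitivity #|[set z in Q | e y z]|; last by rewrite H // yq addn0.
  apply: eq_card => z; rewrite !inE.
  apply/andP/andP => [[zC ->]|[zQ eyz]]; split => //; first exact: (subsetP CQ z zC).
  exact: closedC yC zQ eyz.
rewrite (big_setD1 p pC) eqxx /=.
rewrite (eq_bigr (fun _ => 2)) => [|y]; last by rewrite !inE => /andP [/negbTE -> _].
by rewrite sum_nat_const /= oddD oddM andbF.
Qed.

Lemma two_regular_cycle (Z : {set T}) (s : seq T) x :
  uniq s -> 3 <= size s -> cycle e s -> {subset s <= Z} -> x \in s ->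
  (forall y, y \in Z -> #|[set z in Z | e y z]| = 2) ->
  (forall y, y \in Z -> y \in component e x Z) ->
  Z = [set y in s] /\
  forall u v, u \in s -> v \in s -> e u v = (v == next s u) || (u == next s v).
Proof.
move=> us ss cyc sZ xs deg2 Zconn.
have nbr u z : u \in s -> z \in Z -> e u z -> (z == next s u) || (z == prev s u).
  move=> su zZ euz; apply: (card2_mem (deg2 u (sZ u su))).
  - by rewrite in_set sZ ?mem_next // next_cycle.
  - by rewrite in_set sZ ?mem_prev // e_sym prev_cycle.
  - exact: next_neq_prev.
  - by rewrite in_set zZ euz.
have Zs : Z = [set y in s].
  apply/setP => y; rewrite in_set; apply/idP/idP => [yZ|/sZ //].
  move: (Zconn y yZ); rewrite inE; apply: (connect_ind (P := fun y => y \in s)) => //.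
  move=> u v su /= /and3P [_ vZ euv].
  by case/orP: (nbr u v su vZ euv) => /eqP ->; rewrite ?mem_next ?mem_prev.
split => // u v su sv; apply/idP/idP => [euv|].
  case/orP: (nbr u v su (sZ v sv) euv) => [->//|/eqP ->].
  by rewrite next_prev // eqxx orbT.
by case/orP => /eqP ->; [exact: next_cycle | rewrite e_sym; exact: next_cycle].
Qed.

Lemma two_regular_minus_vertex (Z : {set T}) x v0 v1 : x \in Z -> v0 \in Z -> v0 != v1 ->
  (forall y, y \in Z -> #|[set z in Z | e y z]| = 2) ->
  (forall y, y \in Z -> e x y = (y == v0) || (y == v1)) ->
  v1 \in component e v0 (Z :\ x).
Proof.
move=> xZ v0Z v01 deg2 nbx.
have ev0 : e x v0 by rewrite nbx // eqxx.
have v0x : v0 != x by apply: contraTneq ev0 => ->; rewrite e_irr.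
have v0Q : v0 \in Z :\ x by rewrite in_setD1 v0x.
apply: (two_ends_connected v0Q v01) => y yC.
move: (component_in v0Q yC); rewrite in_setD1 => /andP [yx yZ].
have -> : [set z in Z :\ x | e y z] = [set z in Z | e y z] :\ x.
  by apply/setP => z; rewrite in_set !in_setD1 in_set andbA.
move: (deg2 y yZ); rewrite (cardsD1 x) in_set xZ /= e_sym (nbx y yZ).
move: (#|_ :\ x|) => n.
case: (eqVneq y v0) => [yv0|yv0]; case: (eqVneq y v1) => [yv1|yv1] /=.
- by move: v01; rewrite -yv0 -yv1 eqxx.
all: by move=> <-; rewrite ?addn0 ?add0n ?addKn ?subn0.
Qed.
End Components.

Section AlmostColorings.
Variables (T : finType) (e : rel T).
Hypothesis e_sym : symmetric e.
Hypothesis e_irr : irreflexive e.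
Variables (Z : {set T}) (r : nat).
Hypothesis Z_deg : forall z, z \in Z -> #|[set y in Z | e z y]| <= r.
Hypothesis Z_uncolorable : forall g : T -> nat, (forall v, v \in Z -> g v < r) ->
  (forall u v, u \in Z -> v \in Z -> e u v -> g u != g v) -> False.

Definition almost_coloring t (phi : T -> nat) := [/\ t \in Z,
  forall v, v \in Z -> v != t -> phi v < r &
  forall u v, u \in Z -> v \in Z -> u != t -> v != t -> e u v -> phi u != phi v].

Lemma almost_coloring_in t phi : almost_coloring t phi -> t \in Z.
Proof. by case. Qed.

Lemma almost_coloring_sees t phi c : almost_coloring t phi -> c < r ->
  exists2 y, (y \in Z) && e t y & phi y = c.
Proof.
case=> tZ phi_lt phi_proper cr.
have [/existsP [y /and3P [yZ ety /eqP <-]]|/existsPn Hn] :=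
  boolP [exists y, [&& y \in Z, e t y & phi y == c]]; first by exists y; rewrite ?yZ.
exfalso; apply: (Z_uncolorable (g := fun v => if v == t then c else phi v)).
  by move=> v vZ; case: eqP => [_|/eqP vt]; [exact: cr | exact: phi_lt].
move=> u v uZ vZ euv.
case: (eqVneq u t) => [ut|ut]; case: (eqVneq v t) => [vt|vt].
- by rewrite ut vt e_irr in euv.
- by move: (Hn v); rewrite -ut vZ euv eq_sym.
- by move: (Hn u); rewrite -vt uZ (e_sym v u) euv.
- exact: phi_proper.
Qed.

(* [t] sees all [r] colours with at most [r] neighbours. *)
Lemma almost_coloring_sees_once t phi y1 y2 : almost_coloring t phi ->
  y1 \in Z -> y2 \in Z -> e t y1 -> e t y2 -> phi y1 = phi y2 -> y1 = y2.
Proof.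
move=> At y1Z y2Z e1 e2 E; apply/eqP/negPn/negP => ne.
have : r <= #|[set y in Z | e t y] :\ y2|.
  apply: (card_ge_colors (c := phi)) => j jr.
  have [y /andP[yZ ety] <-] := almost_coloring_sees At jr.
  have [->|yy2] := eqVneq y y2; first by exists y1; rewrite ?E // !inE ne y1Z e1.
  by exists y => //; rewrite !inE yy2 yZ ety.
move: (Z_deg (almost_coloring_in At)); rewrite (cardsD1 y2) !inE y2Z e2 /=; lia.
Qed.

Lemma almost_coloring_shift t phi z : almost_coloring t phi -> z \in Z -> e t z ->
  almost_coloring z (fun v => if v == t then phi z else phi v).
Proof.
move=> At zZ etz; case: (At) => tZ phi_lt phi_proper.
have zt : z != t by apply: contraTneq etz => ->; rewrite e_irr.
split => //.
  by move=> v vZ vz; case: eqP => [_|/eqP vt]; exact: phi_lt.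
move=> u v uZ vZ uz vz euv.
case: (eqVneq u t) => [eu|ut]; case: (eqVneq v t) => [ev|vt] /=.
- by rewrite eu ev e_irr in euv.
- apply/eqP => /(almost_coloring_sees_once At zZ vZ etz); rewrite -eu => /(_ euv) zv.
  by rewrite zv eqxx in vz.
- apply/eqP => /esym /(almost_coloring_sees_once At zZ uZ etz).
  by rewrite -ev e_sym => /(_ euv) zu; rewrite zu eqxx in uz.
- exact: phi_proper.
Qed.

Definition kempe_set t (phi : T -> nat) (i j : nat) :=
  [set y in Z | (y == t) || (phi y == i) || (phi y == j)].

Local Notation kempe_chain t phi i j := (component e t (kempe_set t phi i j)).

Lemma kempe_set_self t phi i j : almost_coloring t phi -> t \in kempe_set t phi i j.
Proof. by move=> At; rewrite inE (almost_coloring_in At) eqxx. Qed.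

Lemma kempe_set_in t phi i j y : y \in kempe_set t phi i j -> y \in Z.
Proof. by rewrite inE => /andP []. Qed.

Lemma kempe_set_color t phi i j y : y \in kempe_set t phi i j -> y != t ->
  (phi y == i) || (phi y == j).
Proof. by rewrite inE => /andP [_] /[swap] /negbTE ->. Qed.

Lemma kempe_set_shift t phi z i j : t \in Z -> z \in kempe_set t phi i j -> z != t ->
  kempe_set z (fun v => if v == t then phi z else phi v) i j = kempe_set t phi i j.
Proof.
move=> tZ zS zt; have zZ := kempe_set_in zS; have zij := kempe_set_color zS zt.
apply/setP => v; rewrite !inE.
have [->|vt] := eqVneq v t; first by rewrite tZ -orbA zij orbT.
by have [->|vz] := eqVneq v z; rewrite //= zZ zij.
Qed.

Lemma kempe_chain_shift t phi i j y : almost_coloring t phi -> y \in kempe_chain t phi i j ->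
  exists2 psi, almost_coloring y psi & kempe_set y psi i j = kempe_set t phi i j.
Proof.
move=> At; rewrite inE; apply: (connect_ind (P := fun y =>
  exists2 psi, almost_coloring y psi & kempe_set y psi i j = kempe_set t phi i j)).
  by exists phi.
move=> u v [psi Au <-] /= /and3P [uS vS euv].
exists (fun w => if w == u then psi v else psi w).
  exact: almost_coloring_shift Au (kempe_set_in vS) euv.
apply: kempe_set_shift (almost_coloring_in Au) vS _.
by apply: contraTneq euv => ->; rewrite e_irr.
Qed.

Lemma kempe_chain_deg2 t phi i j y : almost_coloring t phi -> i != j -> i < r -> j < r ->
  y \in kempe_chain t phi i j -> #|[set z in kempe_set t phi i j | e y z]| = 2.
Proof.
move=> At ij ir jr /(kempe_chain_shift At) [psi Ay <-].
have [yi /andP [yiZ eyi] pyi] := almost_coloring_sees Ay ir.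
have [yj /andP [yjZ eyj] pyj] := almost_coloring_sees Ay jr.
have yij : yi != yj by apply: contraNneq ij => E; rewrite -pyi -pyj E.
suff -> : [set z in kempe_set y psi i j | e y z] = [set yi; yj] by rewrite cards2 yij.
apply/setP => z; rewrite !inE.
apply/idP/idP => [/andP [/andP [zZ]] | /orP [] /eqP ->]; last first.
- by rewrite yjZ pyj eqxx !orbT eyj.
- by rewrite yiZ pyi eqxx orbT eyi.
have [->|_] := eqVneq z y; first by move=> _; rewrite e_irr.
case/orP => /eqP pz eyz.
  by rewrite (almost_coloring_sees_once Ay zZ yiZ eyz eyi (etrans pz (esym pyi))) eqxx.
by rewrite (almost_coloring_sees_once Ay zZ yjZ eyz eyj (etrans pz (esym pyj))) eqxx orbT.
Qed.

Lemma almost_coloring_recolor t phi w c : almost_coloring t phi -> c < r ->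
  (forall z, z \in Z -> e w z -> phi z != c) ->
  almost_coloring t (fun v => if v == w then c else phi v).
Proof.
case=> tZ phi_lt phi_proper cr cfree; split => // [v vZ vt|u v uZ vZ ut vt euv].
  by case: eqP => _; [exact: cr | exact: phi_lt].
case: (eqVneq u w) => [uw|uw]; case: (eqVneq v w) => [vw|vw].
- by rewrite uw vw e_irr in euv.
- by rewrite eq_sym; apply: cfree; rewrite -?uw.
- by apply: cfree; rewrite -?vw // e_sym.
- exact: phi_proper.
Qed.

(* [w] has at most [r] neighbours, two pairs of which share a colour. *)
Lemma missing_color (phi : T -> nat) w i j k (N1 N2 : {set T}) : i < r -> w \in Z -> j != k ->
  #|N1| = 2 -> #|N2| = 2 -> N1 :|: N2 \subset [set z in Z | e w z] ->
  {in N1, forall z, phi z = j} -> {in N2, forall z, phi z = k} ->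
  exists c, [/\ c < r, c != i, c != j, c != k & forall z, z \in Z -> e w z -> phi z != c].
Proof.
move=> ir wZ jk /eqP/cards2P [j1 [j2 [j12 ->]]] /eqP/cards2P [k1 [k2 [k12 ->]]] sub pN1 pN2.
set N := [set z in Z | e w z] in sub *.
have inN z : z \in [set j1; j2] :|: [set k1; k2] -> z \in N := subsetP sub z.
have [j1N j2N k1N k2N] : [/\ j1 \in N, j2 \in N, k1 \in N & k2 \in N].
  by split; apply: inN; rewrite !inE eqxx ?orbT.
have [pj1 pj2] : phi j1 = j /\ phi j2 = j by split; apply: pN1; rewrite !inE eqxx ?orbT.
have [pk1 pk2] : phi k1 = k /\ phi k2 = k by split; apply: pN2; rewrite !inE eqxx ?orbT.
have ne_jk y z : phi y = j -> phi z = k -> y != z.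
  by move=> py pz; apply: contraNneq jk => yz; rewrite -py -pz yz.
have [/existsP [c /andP [ci /forallP cfree]]|/existsPn Hn] := boolP [exists c : 'I_r,
    (val c != i) && [forall z, ((z \in Z) && e w z) ==> (phi z != c)]].
  have cfree' z : z \in Z -> e w z -> phi z != c by move=> zZ ewz; move: (cfree z); rewrite zZ ewz.
  exists c; split => //.
    by rewrite -pj1 eq_sym; move: j1N; rewrite inE => /andP [j1Z /(cfree' _ j1Z)].
  by rewrite -pk1 eq_sym; move: k1N; rewrite inE => /andP [k1Z /(cfree' _ k1Z)].
exfalso; have : size (rem i (iota 0 r)) <= #|N :\ j2 :\ k2|.
  apply: (card_ge_cover (c := phi)); first exact/rem_uniq/iota_uniq.
  move=> l; rewrite (mem_rem_uniq _ (iota_uniq 0 r)) inE mem_iota add0n => /andP [li lr].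
  have [z zN pz] : exists2 z, z \in N & phi z = l.
    move: (Hn (Ordinal lr)); rewrite /= li /= => /forallPn [z].
    by rewrite negb_imply negbK => /andP [zN /eqP pz]; exists z; rewrite ?inE.
  have [zj2|zj2] := eqVneq z j2.
    exists j1; last by rewrite pj1 -pj2 -zj2.
    by rewrite !in_setD1 (ne_jk _ _ pj1 pk2) j12 j1N.
  have [zk2|zk2] := eqVneq z k2.
    exists k1; last by rewrite pk1 -pk2 -zk2.
    by rewrite !in_setD1 k12 eq_sym (ne_jk _ _ pj2 pk1) k1N.
  by exists z; rewrite // !in_setD1 zk2 zj2 zN.
rewrite size_rem ?mem_iota ?add0n ?ir // size_iota.
have := Z_deg wZ; rewrite -/N (cardsD1 j2 N) (cardsD1 k2 (N :\ j2)) !in_setD1 j2N k2N.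
rewrite eq_sym ne_jk //=; lia.
Qed.

Lemma kempe_neighbor_color t phi i j w z : almost_coloring t phi ->
  w \in kempe_set t phi i j -> w != t -> ~~ e t w -> phi w = i ->
  z \in kempe_set t phi i j -> e w z -> phi z = j.
Proof.
case=> _ _ phi_proper wS wt etw pw zS ewz.
have zt : z != t by apply: contraNneq etw => <-; rewrite e_sym.
case/orP: (kempe_set_color zS zt) => /eqP // pz.
by move: (phi_proper _ _ (kempe_set_in wS) (kempe_set_in zS) wt zt ewz); rewrite pw pz eqxx.
Qed.

(* After recolouring [w], one of its two chain neighbours stays in the chain of [t] and
   loses a chain neighbour, contradicting [kempe_chain_deg2]. *)
Lemma kempe_chain_recolor t phi i j c w : almost_coloring t phi -> i != j -> i < r -> j < r ->
  w \in kempe_chain t phi i j -> w != t -> c != i -> c != j ->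
  ~ almost_coloring t (fun v => if v == w then c else phi v).
Proof.
set phi' := fun v => _; move=> At ij ir jr wC wt ci cj At'.
have wS := component_in (kempe_set_self i j At) wC.
have S'E : kempe_set t phi' i j = kempe_set t phi i j :\ w.
  apply/setP => v; rewrite !inE /phi'; have [->|vw] //= := eqVneq v w.
  by rewrite (negbTE wt) (negbTE ci) (negbTE cj) andbF.
have [y yC' /[1!in_set] /andP [yS ewy]] : exists2 y, y \in kempe_chain t phi' i j &
    y \in [set z in kempe_set t phi i j | e w z].
  apply/exists_inP/negbNE/negP => /exists_inPn Hn.
  suff : w \in kempe_chain t phi' i j.
    by case/component_sub => [wt'|]; [rewrite wt' eqxx in wt | rewrite S'E setD11].
  move: wC; rewrite inE; apply: (connect_ind (P := fun y => y \in kempe_chain t phi' i j)).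
    exact: component_self.
  move=> u v uC' /= /and3P [uS vS euv].
  have uS' : u \in kempe_set t phi' i j.
    by case: (component_sub uC') => [->|//]; exact: kempe_set_self.
  have [vw|vw] := eqVneq v w.
    by move: (Hn u uC'); rewrite inE uS -vw e_sym euv.
  by apply: component_closed uC' uS' _ euv; rewrite S'E in_setD1 vw vS.
have yC := component_closed wC wS yS ewy.
move: (kempe_chain_deg2 At' ij ir jr yC'); rewrite S'E.
have -> : [set z in kempe_set t phi i j :\ w | e y z] = [set z in kempe_set t phi i j | e y z] :\ w.
  by apply/setP => z; rewrite in_set !in_setD1 in_set andbA.
move: (kempe_chain_deg2 At ij ir jr yC).
by rewrite (cardsD1 w [set z in _ | e y z]) in_set wS e_sym ewy; lia.
Qed.

Lemma common_kempe_vertex_adj t phi i j k w : almost_coloring t phi ->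
  i != j -> i != k -> j != k -> i < r -> j < r -> k < r ->
  w \in kempe_chain t phi i j -> w \in kempe_chain t phi i k -> w != t -> phi w = i -> e t w.
Proof.
move=> At ij ik jk ir jr kr wCj wCk wt pw; apply/negPn/negP => etw.
have wSj := component_in (kempe_set_self i j At) wCj.
have wSk := component_in (kempe_set_self i k At) wCk.
have nbr_color l (wS : w \in kempe_set t phi i l) z :
    z \in [set z in kempe_set t phi i l | e w z] -> phi z = l.
  by rewrite inE => /andP [zS ewz]; exact: kempe_neighbor_color At wS wt etw pw zS ewz.
have [|c [cr ci cj _ cfree]] := missing_color ir (kempe_set_in wSj) jk
  (kempe_chain_deg2 At ij ir jr wCj) (kempe_chain_deg2 At ik ir kr wCk) _ (nbr_color j wSj)
  (nbr_color k wSk) => //.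
  apply/subsetP => z /[1!in_setU] /orP [] /[1!in_set] /andP [zS ewz];
    by rewrite inE (kempe_set_in zS) ewz.
exact: kempe_chain_recolor At ij ir jr wCj wt ci cj (almost_coloring_recolor At cr cfree).
Qed.

Definition kempe_swap t (phi : T -> nat) (a c : nat) v :=
  if (v \in kempe_chain t phi a c) && (v != t) then (if phi v == a then c else a) else phi v.

Lemma kempe_swap_almost t phi a c : almost_coloring t phi -> a < r -> c < r ->
  almost_coloring t (kempe_swap t phi a c).
Proof.
move=> At ar cr; case: (At) => tZ phi_lt phi_proper.
set D := kempe_chain t phi a c.
have Dcol v : v \in D -> v != t -> (phi v == a) || (phi v == c).
  by move/(component_in (kempe_set_self a c At)); exact: kempe_set_color.
have Dout v w : v \in D -> v != t -> w \in Z -> w != t -> e v w -> w \notin D ->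
    ~~ ((phi w == a) || (phi w == c)).
  move=> vD vt wZ wt evw; apply: contra => wac; apply: (component_closed vD _ _ evw).
    exact: component_in (kempe_set_self a c At) vD.
  by rewrite inE wZ (negbTE wt).
have sw p q : (p == a) || (p == c) -> (q == a) || (q == c) -> p != q ->
    (if p == a then c else a) != (if q == a then c else a).
  by move=> /orP [] /eqP -> /orP [] /eqP ->; rewrite ?eqxx // eq_sym; case: eqP => [_|/eqP] //.
have sw_out p q : ~~ ((q == a) || (q == c)) -> (if p == a then c else a) != q.
  by apply: contraNneq => <-; case: ifP => _; rewrite eqxx ?orbT.
split => // [v vZ vt | u v uZ vZ ut vt euv].
  by rewrite /kempe_swap; case: ifP => _; [case: ifP | exact: phi_lt].
rewrite /kempe_swap (negbTE ut) (negbTE vt) !andbT.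
case uD: (u \in D); case vD: (v \in D).
- exact: sw (Dcol _ uD ut) (Dcol _ vD vt) (phi_proper _ _ uZ vZ ut vt euv).
- exact/sw_out/(Dout _ _ uD ut vZ vt euv)/negbT.
- by rewrite eq_sym; apply/sw_out/(Dout _ _ vD vt uZ ut _ (negbT uD)); rewrite e_sym.
- exact: phi_proper.
Qed.

(* A vertex coloured [a] on both the [(a, b)]- and the [(a, c)]-chain is adjacent to [t],
   hence is [va]. *)
Lemma kempe_swap_chain_sub t phi a b c va : almost_coloring t phi ->
  a != b -> a != c -> b != c -> a < r -> b < r -> c < r ->
  va \in Z -> e t va -> phi va = a ->
  kempe_chain t phi a b :\ va \subset kempe_set t (kempe_swap t phi a c) b a.
Proof.
move=> At ab ac bc ar br cr vaZ eta pa; apply/subsetP => y /[1!in_setD1] /andP [yva yC].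
have yS := component_in (kempe_set_self a b At) yC; have yZ := kempe_set_in yS.
have [->|yt] := eqVneq y t; first exact: kempe_set_self (kempe_swap_almost At ar cr).
have yD : y \notin kempe_chain t phi a c.
  apply/negP => yD; have yS' := component_in (kempe_set_self a c At) yD.
  have pya : phi y = a.
    case/orP: (kempe_set_color yS yt) => /eqP // pyb.
    by move: (kempe_set_color yS' yt); rewrite pyb (negbTE bc) eq_sym (negbTE ab).
  have ety := common_kempe_vertex_adj At ab ac bc ar br cr yC yD yt pya.
  by move: yva; rewrite (almost_coloring_sees_once At yZ vaZ ety eta (etrans pya (esym pa))) eqxx.
move: yS; rewrite !inE /kempe_swap (negbTE yD) (negbTE yt) /= => /andP [-> pyab].
by rewrite orbC.
Qed.

Lemma kempe_chain_second_neighbor t phi a b va : almost_coloring t phi ->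
  a != b -> a < r -> b < r -> va \in Z -> e t va -> phi va = a ->
  exists u, [/\ [set z in kempe_set t phi a b | e va z] = [set t; u], u != t, u \in Z,
    e va u & phi u = b].
Proof.
move=> At ab ar br vaZ eta pa; case: (At) => _ _ phi_proper.
have vat : va != t by apply: contraTneq eta => ->; rewrite e_irr.
have vaS : va \in kempe_set t phi a b by rewrite inE vaZ pa eqxx orbT.
have vaC := component_closed (component_self _ _ _) (kempe_set_self a b At) vaS eta.
have tN : t \in [set z in kempe_set t phi a b | e va z].
  by rewrite in_set (kempe_set_self a b At) e_sym eta.
have [u Eu] : exists u, [set z in kempe_set t phi a b | e va z] :\ t = [set u].
  apply/cards1P; move: (kempe_chain_deg2 At ab ar br vaC).
  by rewrite (cardsD1 t) tN add1n => -[->].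
have /[1!in_setD1] /andP [ut /[1!in_set] /andP [uS evu]] :
  u \in [set z in kempe_set t phi a b | e va z] :\ t by rewrite Eu set11.
exists u; split; rewrite ?(kempe_set_in uS) //; first by rewrite -(setD1K tN) Eu.
case/orP: (kempe_set_color uS ut) => /eqP // pua.
by move: (phi_proper _ _ vaZ (kempe_set_in uS) vat ut evu); rewrite pa pua eqxx.
Qed.

Lemma kempe_chain_cut t phi a b va u : almost_coloring t phi -> a != b -> a < r -> b < r ->
  va \in kempe_set t phi a b -> e t va -> u != t ->
  [set z in kempe_set t phi a b | e va z] = [set t; u] ->
  u \in component e t (kempe_chain t phi a b :\ va).
Proof.
move=> At ab ar br vaS eta ut NE.
have Sab := kempe_set_self a b At.
have vaC := component_closed (component_self _ _ _) Sab vaS eta.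
have vat : va != t by apply: contraTneq eta => ->; rewrite e_irr.
have [evt evu] : e va t /\ e va u.
  by have := set21 t u; have := set22 t u; rewrite -NE !in_set => /andP [_ ?] /andP [_ ?].
have tQ : t \in kempe_chain t phi a b :\ va by rewrite in_setD1 eq_sym vat component_self.
apply: (two_ends_connected e_sym e_irr tQ) => [|y yC]; first by rewrite eq_sym.
move: (component_in tQ yC); rewrite in_setD1 => /andP [yva yCab].
have yS := component_in Sab yCab.
have -> : [set z in kempe_chain t phi a b :\ va | e y z] =
    [set z in kempe_set t phi a b | e y z] :\ va.
  apply/setP => z; rewrite in_set !in_setD1 in_set; apply/idP/idP.
    by move=> /andP [/andP [-> zC] ->]; rewrite (component_in Sab zC).
  move=> /andP [-> /andP [zS eyz]]; rewrite eyz andbT /=.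
  exact: component_closed yCab yS zS eyz.
move: (kempe_chain_deg2 At ab ar br yCab); rewrite (cardsD1 va) in_set vaS /= e_sym.
have -> : e va y = (y == t) || (y == u).
  apply/idP/idP => [evy|/orP [] /eqP -> //].
  have : y \in [set z in kempe_set t phi a b | e va z] by rewrite in_set yS evy.
  by rewrite NE !inE.
move: (#|_ :\ va|) => n.
case: (eqVneq y t) => [yt|yt]; case: (eqVneq y u) => [yu|yu] /=.
- by move: ut; rewrite -yu yt eqxx.
all: by move=> <-; rewrite ?addn0 ?add0n ?addKn ?subn0.
Qed.

(* Swapping [a] and [c] on the [(a, c)]-chain of [t] recolours [va] but keeps the rest of
   its [(a, b)]-chain; the second [(a, b)]-neighbour [u] of [va] then lies on both the
   [(b, a)]- and the [(b, c)]-chain, so it must be adjacent to [t], which is impossible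
   since [vb] is the only [b]-coloured neighbour of [t]. *)
Lemma almost_coloring_neighbors_adj t phi a b c va vb : almost_coloring t phi ->
  a != b -> a != c -> b != c -> a < r -> b < r -> c < r ->
  va \in Z -> vb \in Z -> e t va -> e t vb -> phi va = a -> phi vb = b -> e va vb.
Proof.
move=> At ab ac bc ar br cr vaZ vbZ eta etb pa pb; apply/negPn/negP => nab.
have vat : va != t by apply: contraTneq eta => ->; rewrite e_irr.
have [u [NE ut uZ evu pu]] := kempe_chain_second_neighbor At ab ar br vaZ eta pa.
have etu : ~~ e t u.
  apply: contra nab => etu.
  by rewrite -(almost_coloring_sees_once At uZ vbZ etu etb (etrans pu (esym pb))).
set phi' := kempe_swap t phi a c.
have At' : almost_coloring t phi' := kempe_swap_almost At ar cr.
have vaD : va \in kempe_chain t phi a c.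
  apply: component_closed (component_self _ _ _) (kempe_set_self a c At) _ eta.
  by rewrite inE vaZ pa eqxx orbT.
have uD : u \notin kempe_chain t phi a c.
  apply/negP => /(component_in (kempe_set_self a c At)) /kempe_set_color /(_ ut).
  by rewrite pu eq_sym (negbTE ab) (negbTE bc).
have pu' : phi' u = b by rewrite /phi' /kempe_swap (negbTE uD).
have uCbc : u \in kempe_chain t phi' b c.
  have vaS' : va \in kempe_set t phi' b c.
    by rewrite inE vaZ /phi' /kempe_swap vaD vat pa !eqxx orbT.
  apply: component_closed (component_closed (component_self _ _ _) _ vaS' eta) vaS' _ evu.
    exact: kempe_set_self At'.
  by rewrite inE uZ pu' eqxx orbT.
have uCba : u \in kempe_chain t phi' b a.
  apply: (component_mono (kempe_swap_chain_sub At ab ac bc ar br cr vaZ eta pa)).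
  by apply: kempe_chain_cut At ab ar br _ eta ut NE; rewrite inE vaZ pa eqxx orbT.
move: etu; rewrite (common_kempe_vertex_adj At' _ _ ac br ar cr uCba uCbc ut pu') //.
by rewrite eq_sym.
Qed.

Lemma almost_coloring_neighbors_clique t phi y1 y2 : almost_coloring t phi -> 3 <= r ->
  y1 \in Z -> y2 \in Z -> e t y1 -> e t y2 -> y1 != y2 -> e y1 y2.
Proof.
move=> At r3 y1Z y2Z e1 e2 y12; case: (At) => _ phi_lt _.
have ab : phi y1 != phi y2.
  by apply: contraNneq y12 => /(almost_coloring_sees_once At y1Z y2Z e1 e2) ->.
have [c [c3 ac bc]] := third_color ab.
apply: (almost_coloring_neighbors_adj At ab ac bc) => //; last exact: leq_trans c3 r3.
  by apply: phi_lt y1Z _; apply: contraTneq e1 => ->; rewrite e_irr.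
by apply: phi_lt y2Z _; apply: contraTneq e2 => ->; rewrite e_irr.
Qed.

Lemma almost_coloring_complete t phi : almost_coloring t phi -> 3 <= r ->
  (forall y, y \in Z -> y \in component e t Z) -> complete_on e Z.
Proof.
move=> At r3 Zconn; have tZ := almost_coloring_in At.
have clique := almost_coloring_neighbors_clique At r3.
pose N := [set y in Z | e t y].
have cN : r <= #|N|.
  apply: (card_ge_colors (c := phi)) => j /(almost_coloring_sees At) [y yN <-].
  by exists y; rewrite ?inE.
pose Y := t |: N.
have Y_closed y z : y \in Y -> z \in Z -> e y z -> z \in Y.
  rewrite in_setU1 => /orP [/eqP -> | yN] zZ eyz; first by rewrite in_setU1 in_set zZ eyz orbT.
  move: (yN); rewrite in_set => /andP [yZ ety]; apply/negPn/negP => zY.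
  have sub : z |: (Y :\ y) \subset [set w in Z | e y w].
    apply/subsetP => w; rewrite in_setU1 in_setD1 => /orP [/eqP -> | /andP [wy]].
      by rewrite in_set zZ eyz.
    rewrite in_setU1 => /orP [/eqP -> | wN]; first by rewrite in_set tZ e_sym ety.
    move: wN; rewrite !in_set => /andP [wZ etw].
    by rewrite wZ (clique _ _ yZ wZ ety etw) // eq_sym.
  have := subset_leq_card sub; have := Z_deg yZ.
  rewrite cardsU1 in_setD1 (negbTE zY) andbF /=.
  have : #|Y| = (#|Y :\ y|).+1 by rewrite (cardsD1 y Y) in_setU1 yN orbT.
  have : #|Y| = (#|N|).+1 by rewrite cardsU1 in_set e_irr andbF.
  move: cN; move: #|N| #|Y| #|Y :\ y| #|[set w in Z | e y w]| => n1 n2 n3 n4; lia.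
have ZY y : y \in Z -> y \in Y.
  move/Zconn; rewrite inE; apply: (connect_ind (P := fun y => y \in Y)).
    by rewrite in_setU1 eqxx.
  by move=> u v uY /= /and3P [_ vZ euv]; exact: Y_closed uY vZ euv.
move=> u v uZ vZ uv; move: (ZY u uZ) (ZY v vZ); rewrite !in_setU1 !in_set.
case/orP => [/eqP eu|/andP [_ etu]]; case/orP => [/eqP ev|/andP [_ etv]].
- by rewrite eu ev eqxx in uv.
- by rewrite eu.
- by rewrite ev e_sym.
- exact: clique.
Qed.

Lemma almost_coloring_two_regular x phi : almost_coloring x phi -> r = 2 ->
  (forall y, y \in Z -> y \in component e x Z) ->
  forall y, y \in Z -> #|[set z in Z | e y z]| = 2.
Proof.
move=> Ax r2 Zconn; case: (Ax) => _ phi_lt _.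
have S01 : kempe_set x phi 0 1 = Z.
  apply/setP => v; rewrite inE; case vZ: (v \in Z) => //=.
  by case: (eqVneq v x) => //= /(phi_lt v vZ); rewrite r2; case: (phi v) => [|[|]].
by move=> y yZ; rewrite -S01; apply: kempe_chain_deg2 Ax _ _ _ _; rewrite ?r2 ?S01 ?Zconn.
Qed.

Lemma almost_coloring_two_neighbors x phi : almost_coloring x phi -> r = 2 ->
  exists v0 v1, [/\ v0 \in Z, v1 \in Z, phi v0 = 0, phi v1 = 1 &
    forall y, y \in Z -> e x y = (y == v0) || (y == v1)].
Proof.
move=> Ax r2; case: (Ax) => _ phi_lt _.
have [v0 /andP [v0Z ev0] p0] : exists2 v0, (v0 \in Z) && e x v0 & phi v0 = 0.
  by apply: almost_coloring_sees; rewrite ?r2.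
have [v1 /andP [v1Z ev1] p1] : exists2 v1, (v1 \in Z) && e x v1 & phi v1 = 1.
  by apply: almost_coloring_sees; rewrite ?r2.
exists v0, v1; split => // y yZ; apply/idP/idP => [exy|/orP [] /eqP -> //].
have /(phi_lt y yZ) : y != x by apply: contraTneq exy => ->; rewrite e_irr.
rewrite r2; case E: (phi y) => [|[|]] // _.
  by rewrite (almost_coloring_sees_once Ax yZ v0Z exy ev0 (etrans E (esym p0))) eqxx.
by rewrite (almost_coloring_sees_once Ax yZ v1Z exy ev1 (etrans E (esym p1))) eqxx orbT.
Qed.

Lemma almost_coloring_odd_cycle x phi : almost_coloring x phi -> r = 2 ->
  (forall y, y \in Z -> y \in component e x Z) -> odd_cycle_on e Z.
Proof.
move=> Ax r2 Zconn; have xZ := almost_coloring_in Ax; case: (Ax) => _ phi_lt phi_proper.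
have phi_lt2 v : v \in Z -> v != x -> phi v < 2 by rewrite -r2; exact: phi_lt.
have deg2 := almost_coloring_two_regular Ax r2 Zconn.
have [v0 [v1 [v0Z v1Z p0 p1 nbx]]] := almost_coloring_two_neighbors Ax r2.
have ev0 : e x v0 by rewrite nbx ?eqxx.
have ev1 : e x v1 by rewrite nbx ?eqxx ?orbT.
have v01 : v0 != v1 by apply/eqP => E; move: p0; rewrite E p1.
pose relQ := [rel u v | [&& u \in Z :\ x, v \in Z :\ x & e u v]].
have [p [pth up lastp]] : exists p, [/\ path relQ v0 p, uniq (v0 :: p) & v1 = last v0 p].
  move: (two_regular_minus_vertex e_sym e_irr xZ v0Z v01 deg2 nbx).
  rewrite inE => /connectP [p0' pth ->].
  by case: (shortenP pth) => p' pth' up' _; exists p'.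
have pathQ u q : path relQ u q -> {subset q <= Z :\ x}.
  elim: q u => //= w q IH u /andP [/and3P [_ wQ _] pth'] z.
  by rewrite inE => /orP [/eqP -> // | /(IH _ pth')].
have pQ : {subset v0 :: p <= Z :\ x}.
  move=> y; rewrite inE => /orP [/eqP -> | /(pathQ _ _ pth) //].
  by rewrite in_setD1 v0Z andbT; apply: contraTneq ev0 => ->; rewrite e_irr.
(* [p] alternates between the colours 0 of [v0] and 1 of [v1]. *)
have oddp : odd (size p).
  have lt2 : all (fun v => phi v < 2) (v0 :: p).
    by apply/allP => y /pQ; rewrite in_setD1 => /andP [yx yZ]; exact: phi_lt2.
  have alt : path (fun v w => phi v != phi w) v0 p.
    apply: sub_path pth => u v /and3P [].
    by rewrite !in_setD1 => /andP [ux uZ] /andP [vx vZ]; exact: phi_proper.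
  by move: (alternating_path_parity lt2 alt); rewrite -lastp p1 p0 modn2; case: odd.
pose s := x :: v0 :: p.
have us : uniq s.
  by rewrite /s cons_uniq up andbT; apply/negP => /pQ; rewrite in_setD1 eqxx.
have ss : 3 <= size s by rewrite /s /=; case: (p) oddp.
have sZ : {subset s <= Z}.
  move=> y; rewrite /s inE => /orP [/eqP -> // | /pQ]; by rewrite in_setD1 => /andP [].
have cyc : cycle e s.
  rewrite /s /= ev0 /= rcons_path -lastp e_sym ev1 andbT.
  by apply: sub_path pth => u v /= /and3P [].
have [Zs adj] := two_regular_cycle e_sym us ss cyc sZ (mem_head x _) deg2 Zconn.
by exists s; split; rewrite //= negbK.
Qed.
End AlmostColorings.

Section EdgeCount.
Variables (T : finType) (e : rel T).
Hypothesis e_sym : symmetric e.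

Definition is_edge (E : {set T}) := [exists u, exists v, (E == [set u; v]) && (u != v) && e u v].

Lemma nedgesE (U : {set T}) : nedges e U = #|[set E : {set T} | (E \subset U) && is_edge E]|.
Proof. by []. Qed.

Lemma edges_setU1 (A : {set T}) z : z \notin A ->
  [set E : {set T} | (E \subset z |: A) && is_edge E] =
  [set E : {set T} | (E \subset A) && is_edge E] :|: [set [set z; y] | y in [set y in A | e z y]].
Proof.
move=> zA; apply/setP => E; rewrite !inE; apply/idP/idP.
  move=> /andP [sub isEE]; have [zE|zE] := boolP (z \in E); last first.
    rewrite isEE andbT; apply/orP; left; apply/subsetP => w wE.
    by move: (subsetP sub w wE); rewrite in_setU1 => /orP [/eqP wz|//]; rewrite -wz wE in zE.
  move: (isEE) => /existsP [u /existsP [v /andP [/andP [/eqP EE uv] euv]]].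
  have [w [Ew wz ezw]] : exists w, [/\ E = [set z; w], w != z & e z w].
    move: zE; rewrite EE !inE => /orP [/eqP zu|/eqP zv].
      by exists v; rewrite zu; split => //; rewrite eq_sym.
    by exists u; rewrite zv setUC; split => //; rewrite e_sym.
  apply/orP; right; apply/imsetP; exists w => //.
  have /(subsetP sub) : w \in E by rewrite Ew !inE eqxx orbT.
  by rewrite in_setU1 (negbTE wz) /= => wA; rewrite in_set wA ezw.
case/orP => [/andP [sub ->]|/imsetP [y /[1!in_set] /andP [yA ezy] ->]].
  by rewrite andbT; apply/subsetP => w /(subsetP sub) wA; rewrite in_setU1 wA orbT.
have zy : z != y by apply: contraNneq zA => ->.
apply/andP; split.
  by apply/subsetP => w; rewrite !inE => /orP [->//|/eqP ->]; rewrite yA orbT.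
by apply/existsP; exists z; apply/existsP; exists y; rewrite eqxx zy ezy.
Qed.

Lemma nedges_setU1 (A : {set T}) z : z \notin A ->
  nedges e (z |: A) = nedges e A + #|[set y in A | e z y]|.
Proof.
move=> zA; rewrite !nedgesE (edges_setU1 zA) cardsU.
have -> : [set E : {set T} | (E \subset A) && is_edge E] :&: [set [set z; y] | y in [set y in A | e z y]]
    = set0.
  apply/setP => E; rewrite !inE; apply/negP => /andP [/andP [sub _] /imsetP [y _ Ey]].
  by move: (subsetP sub z); rewrite Ey !inE eqxx => /(_ isT); rewrite (negbTE zA).
rewrite cards0 subn0 card_in_imset // => y1 y2; rewrite !inE => /andP [y1A _] /andP [y2A _] E.
have : y1 \in [set z; y2] by rewrite -E !inE eqxx orbT.
by rewrite !inE => /orP [/eqP y1z|/eqP //]; rewrite -y1z y1A in zA.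
Qed.

Lemma card_nbrs_setU1 (A : {set T}) y z : y \notin A ->
  #|[set w in y |: A | e z w]| = e z y + #|[set w in A | e z w]|.
Proof.
move=> yA; case ezy: (e z y).
  have -> : [set w in y |: A | e z w] = y |: [set w in A | e z w].
    by apply/setP => w; rewrite !inE; case: eqP => [->|].
  by rewrite cardsU1 inE (negbTE yA).
by apply: eq_card => w; rewrite !inE; case: eqP => [->|] //=; rewrite ezy andbF.
Qed.
End EdgeCount.

Lemma chi_le_coloring (T : finType) (e : rel T) K (c : T -> nat) :
  (forall v, c v < K) -> (forall u v, e u v -> c u != c v) -> chi e <= K.
Proof.
move=> cK c_proper; have cKS v : c v < K.+1 by rewrite ltnS ltnW.
have : colorable_on e setT K.
  apply/existsP; exists [ffun v => inord (c v)]; apply/andP; split.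
    by apply/forall_inP => u _; rewrite ffunE inordK.
  apply/forall_inP => u _; apply/forall_inP => v _; apply/implyP => /andP [_ euv].
  rewrite !ffunE; apply: contra (c_proper _ _ euv) => /eqP /(congr1 val).
  by rewrite /= !inordK // => ->.
by rewrite /chi /chi_on; case: ex_minnP => m _; apply.
Qed.

Section PartitionedColorings.
Variables (T : finType) (e : rel T).
Hypothesis e_sym : symmetric e.
Hypothesis e_irr : irreflexive e.
Variables (a : nat) (r : 'I_a -> nat).
Hypothesis chi_eq : 1 + \sum_(i < a) r i = chi e.

(* The classes [L_{i,j}] are numbered consecutively, block [i] after block [i-1]. *)
Definition block_offset (m : nat) := \sum_(l < a | l < m) r l.

Definition class_index (i : 'I_a) j := block_offset i + j.

Lemma block_offsetS (i : 'I_a) : block_offset i.+1 = block_offset i + r i.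
Proof.
rewrite /block_offset (bigD1 i) //= addnC; congr (_ + _); apply: eq_bigl => l.
by rewrite ltnS -val_eqE ltn_neqAle andbC.
Qed.

Lemma block_offset_mono m n : m <= n -> block_offset m <= block_offset n.
Proof.
move=> mn; rewrite [X in X <= _]big_mkcond [X in _ <= X]big_mkcond /=.
apply: leq_sum => l _; case: ifP => lm; case: ifP => ln //.
by rewrite (leq_trans lm mn) in ln.
Qed.

Lemma class_index_lt_offset i j : j < r i -> class_index i j < block_offset i.+1.
Proof. by move=> jr; rewrite block_offsetS /class_index ltn_add2l. Qed.

Lemma class_index_lt i j : j < r i -> class_index i j < \sum_(l < a) r l.
Proof.
move=> /class_index_lt_offset lt; apply: leq_trans lt _.
have -> : \sum_(l < a) r l = block_offset a by apply: eq_bigl => l; rewrite ltn_ord.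
exact: block_offset_mono.
Qed.

Lemma class_index_inj i j i' j' : j < r i -> j' < r i' ->
  class_index i j = class_index i' j' -> i = i' /\ j = j'.
Proof.
move=> jr jr' E; case: (ltngtP i i') => [lt|lt|/val_inj eq].
- have := leq_trans (class_index_lt_offset jr) (block_offset_mono lt).
  by rewrite E /class_index ltnNge leq_addr.
- have := leq_trans (class_index_lt_offset jr') (block_offset_mono lt).
  by rewrite -E /class_index ltnNge leq_addr.
- by subst i'; split => //; move: E => /addnI.
Qed.

Lemma no_coloring_below_chi (c : T -> nat) : (forall v, c v < \sum_(i < a) r i) ->
  ~ (forall u v, e u v -> c u != c v).
Proof. by move=> cb /(chi_le_coloring cb); rewrite -chi_eq ltnn. Qed.

Definition pcol_index (g : T -> option ('I_a * nat)) v :=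
  if g v is Some (i, j) then class_index i j else 0.

Lemma pcol_class t g v : pcol e r t g -> v != t -> exists i j, g v = Some (i, j) /\ j < r i.
Proof.
case=> g_none g_lt _ _ vt; case E: (g v) => [[i j]|]; first by exists i, j; split; last exact: g_lt E.
by move: (g_none v); rewrite E eqxx (negbTE vt).
Qed.

Lemma pcol_index_lt t g v : pcol e r t g -> v != t -> pcol_index g v < \sum_(i < a) r i.
Proof.
by move=> Pg /(pcol_class Pg) [i [j [E jr]]]; rewrite /pcol_index E; exact: class_index_lt.
Qed.

Lemma pcol_index_inj t g u v : pcol e r t g -> u != t -> v != t ->
  pcol_index g u = pcol_index g v -> g u = g v.
Proof.
move=> Pg /(pcol_class Pg) [i [j [E jr]]] /(pcol_class Pg) [i' [j' [E' jr']]].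
by rewrite /pcol_index E E' => /(class_index_inj jr jr') [-> ->].
Qed.

(* Otherwise the singleton could join [L_{i,j}], leaving [chi - 1] colours. *)
Lemma pcol_singleton_adj t g (i : 'I_a) j : pcol e r t g -> j < r i ->
  exists v, g v = Some (i, j) /\ e t v.
Proof.
move=> Pg jr; case: (Pg) => _ _ _ g_proper.
have [/existsP [v /andP [/eqP E etv]]|/existsPn Hn] :=
  boolP [exists v, (g v == Some (i, j)) && e t v]; first by exists v.
exfalso; apply: (no_coloring_below_chi (c := fun v => if v == t then class_index i j
  else pcol_index g v)) => [v|u v euv].
  by case: eqP => [_|/eqP vt]; [exact: class_index_lt | exact: pcol_index_lt Pg vt].
have uv : u != v by apply: contraTneq euv => ->; rewrite e_irr.
case: (eqVneq u t) => [ut|ut]; case: (eqVneq v t) => [vt|vt].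
- by rewrite ut vt eqxx in uv.
- have [i' [j' [E jr']]] := pcol_class Pg vt.
  rewrite /pcol_index E; apply/eqP => /(class_index_inj jr jr') [ii jj].
  by move: (Hn v); rewrite E ii jj -ut eqxx euv.
- have [i' [j' [E jr']]] := pcol_class Pg ut.
  rewrite /pcol_index E; apply/eqP => /esym /(class_index_inj jr jr') [ii jj].
  by move: (Hn u); rewrite E ii jj -vt eqxx e_sym euv.
- by apply: contra (g_proper _ _ euv) => /eqP /(pcol_index_inj Pg ut vt) ->.
Qed.
End PartitionedColorings.

Section SingletonSwap.
Variables (T : finType) (e : rel T).
Hypothesis e_sym : symmetric e.
Hypothesis e_irr : irreflexive e.
Variables (a : nat) (r : 'I_a -> nat) (i : 'I_a).

Definition swap_singleton (g : T -> option ('I_a * nat)) u v w :=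
  if w == v then None else if w == u then g v else g w.

Lemma swap_singleton_pcol u g v j : pcol e r u g -> e u v -> g v = Some (i, j) ->
  (forall z, e u z -> g z = Some (i, j) -> z = v) -> pcol e r v (swap_singleton g u v).
Proof.
case=> g_none g_lt g_full g_proper euv gv v_uniq.
have uv : u != v by apply: contraTneq euv => ->; rewrite e_irr.
have gu : g u = None by apply/eqP; rewrite g_none.
have g'_some w : w != v -> swap_singleton g u v w != None.
  move=> wv; rewrite /swap_singleton (negbTE wv).
  by case: (eqVneq w u) => [_|wu]; rewrite ?gv ?g_none.
split.
- move=> w; have [->|wv] := eqVneq w v; first by rewrite /swap_singleton eqxx.
  exact/negbTE/g'_some.
- move=> w i' j'; rewrite /swap_singleton; case: (w == v) => //.
  by case: (w == u) => /g_lt.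
- move=> i' j' /g_full [w gw]; have [wv|wv] := eqVneq w v.
    by exists u; rewrite /swap_singleton (negbTE uv) eqxx -wv.
  exists w; rewrite /swap_singleton (negbTE wv); case: (eqVneq w u) => // wu.
  by rewrite wu gu in gw.
move=> w1 w2 e12.
have w12 : w1 != w2 by apply: contraTneq e12 => ->; rewrite e_irr.
have [w1v|w1v] := eqVneq w1 v.
  by rewrite {1}/swap_singleton w1v eqxx eq_sym g'_some // -w1v eq_sym.
have [w2v|w2v] := eqVneq w2 v.
  by rewrite [X in _ != X]/swap_singleton w2v eqxx g'_some.
rewrite /swap_singleton (negbTE w1v) (negbTE w2v).
case: (eqVneq w1 u) => [w1u|w1u]; case: (eqVneq w2 u) => [w2u|w2u].
- by rewrite w1u w2u eqxx in w12.
- apply: contra w2v => /eqP E; apply/eqP/v_uniq; first by rewrite -w1u.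
  by rewrite -E.
- apply: contra w1v => /eqP E; apply/eqP/v_uniq; first by rewrite -w2u e_sym.
  by rewrite E.
- exact: g_proper.
Qed.

Lemma Upart_swap_singleton u g v j : u != v -> g u = None -> g v = Some (i, j) ->
  Upart (swap_singleton g u v) i = u |: (Upart g i :\ v) /\
  forall l, l != i -> Upart (swap_singleton g u v) l = Upart g l.
Proof.
move=> uv gu gv; split => [|l li]; apply/setP => w; rewrite ?in_setU1 ?in_setD1 !inE.
  rewrite /swap_singleton; case: (eqVneq w v) => [->|wv]; first by rewrite eq_sym (negbTE uv).
  by case: (eqVneq w u) => [->|wu] /=; rewrite ?gv ?eqxx.
rewrite /swap_singleton; case: (eqVneq w v) => [->|wv]; first by rewrite gv eq_sym (negbTE li).
by case: (eqVneq w u) => [->|wu] //=; rewrite gv gu eq_sym (negbTE li).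
Qed.

Lemma pcost_swap_singleton u g v j : u != v -> g u = None -> g v = Some (i, j) ->
  pcost e (swap_singleton g u v) + #|[set y in Upart g i :\ v | e v y]| =
  pcost e g + #|[set y in Upart g i :\ v | e u y]|.
Proof.
move=> uv gu gv; have [Ui Ul] := Upart_swap_singleton uv gu gv.
have vU : v \in Upart g i by rewrite inE gv eqxx.
have uU : u \notin Upart g i :\ v by rewrite in_setD1 inE gu andbF.
rewrite /pcost (bigD1 i) // [in RHS](bigD1 i) //= Ui (nedges_setU1 e_sym uU).
rewrite -[in nedges e (Upart g i)](setD1K vU) (nedges_setU1 e_sym (negbT (setD11 v _))).
under eq_bigr => l li do rewrite Ul //.
lia.
Qed.
End SingletonSwap.

Section MinimalColoring.
Variables (T : finType) (e : rel T).
Hypothesis e_sym : symmetric e.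
Hypothesis e_irr : irreflexive e.
Variables (a : nat) (r : 'I_a -> nat).
Hypothesis chi_eq : 1 + \sum_(l < a) r l = chi e.
Variables (x : T) (f : T -> option ('I_a * nat)) (i : 'I_a).
Hypothesis f_pcol : pcol e r x f.
Hypothesis f_min : forall x' f', pcol e r x' f' -> pcost e f <= pcost e f'.
Local Notation W := (x |: Upart f i).

Lemma pcol_class_neighbor_unique u g j v z : pcol e r u g ->
  #|[set w in u |: Upart g i | e u w]| <= r i ->
  e u v -> e u z -> g v = Some (i, j) -> g z = Some (i, j) -> z = v.
Proof.
move=> Pg dg euv euz gv gz; apply/eqP/negPn/negP => zv.
set N := [set w in u |: Upart g i | e u w] in dg.
have inN w j' : g w = Some (i, j') -> e u w -> w \in N.
  by move=> gw euw; rewrite inE in_setU1 inE gw eqxx orbT euw.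
have : r i <= #|N :\ z|.
  apply: (card_ge_colors (c := fun w => if g w is Some (_, j') then j' else 0)) => j' jr.
  have [w [gw euw]] := pcol_singleton_adj e_sym e_irr chi_eq Pg jr.
  have [wz|wz] := eqVneq w z; last by exists w; rewrite ?gw // in_setD1 wz (inN _ _ gw euw).
  exists v; last by rewrite gv; move: gz; rewrite -wz gw => -[->].
  by rewrite in_setD1 (eq_sym v z) zv (inN _ _ gv euv).
by move: dg; rewrite (cardsD1 z N) (inN _ _ gz euz); lia.
Qed.

Definition singleton_at y g := [/\ pcol e r y g, pcost e g = pcost e f,
  y |: Upart g i = W & #|[set z in W | e y z]| <= r i].

(* By minimality of [f], moving the singleton from [u] to [v] cannot lower the cost; comparing
   the costs transfers the degree bound from [u] to [v]. *)
Lemma singleton_at_step u v g : singleton_at u g -> v \in W -> e u v ->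
  exists g', singleton_at v g'.
Proof.
case=> Pg cg Wg dg vW euv.
have uv : u != v by apply: contraTneq euv => ->; rewrite e_irr.
have gu : g u = None by case: Pg => g_none _ _ _; apply/eqP; rewrite g_none.
have vU : v \in Upart g i.
  by move: vW; rewrite -Wg in_setU1 (eq_sym v u) (negbTE uv).
have [j gv] : exists j, g v = Some (i, j).
  by move: vU; rewrite inE; case: (g v) => [[i' j]|] // /eqP ->; exists j.
have dg' : #|[set w in u |: Upart g i | e u w]| <= r i by rewrite Wg.
have Pg' := swap_singleton_pcol e_sym e_irr Pg euv gv
  (fun z euz gz => pcol_class_neighbor_unique Pg dg' euv euz gv gz).
have [Ui _] := Upart_swap_singleton uv gu gv.
have cost := pcost_swap_singleton e_sym uv gu gv.
set g' := swap_singleton g u v in Pg' Ui cost *.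
set U := Upart g i :\ v in Ui cost.
have WE : W = u |: (v |: U) by rewrite -Wg setD1K.
have vU' : v \notin U by rewrite setD11.
have uU' : u \notin v |: U by rewrite in_setU1 (negbTE uv) in_setD1 inE gu andbF.
have du : #|[set z in W | e u z]| = 1 + #|[set y in U | e u y]|.
  by rewrite WE !card_nbrs_setU1 // e_irr euv.
have dv : #|[set z in W | e v z]| = 1 + #|[set y in U | e v y]|.
  by rewrite WE !card_nbrs_setU1 // e_irr e_sym euv.
have W'E : v |: Upart g' i = W by rewrite Ui WE setUCA.
have lo : r i <= #|[set z in W | e v z]|.
  apply: (card_ge_colors (c := fun w => if g' w is Some (_, j') then j' else 0)) => j' jr.
  have [w [gw evw]] := pcol_singleton_adj e_sym e_irr chi_eq Pg' jr.
  by exists w; rewrite ?gw // in_set -W'E in_setU1 inE gw eqxx orbT evw.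
have mn := f_min Pg'.
exists g'; split => //; move: mn; rewrite -cg; lia.
Qed.

Local Notation Z := (component e x W).

Lemma component_closed_W u v : u \in Z -> v \in W -> e u v -> v \in Z.
Proof. by move=> uZ; apply: component_closed uZ (component_in (setU11 x _) uZ). Qed.

Lemma component_deg_in_W y : deg_in e Z x = r i -> y \in Z -> #|[set z in W | e y z]| <= r i.
Proof.
move=> x_deg; rewrite inE => xy.
suff [g [_ _ _ //]] : exists g, singleton_at y g.
apply: (connect_ind (P := fun y => exists g, singleton_at y g)) xy; last first.
  by move=> u v [g Hg] /= /and3P [_ vW euv]; exact: singleton_at_step Hg vW euv.
exists f; split => //; rewrite -x_deg; apply: subset_leq_card; apply/subsetP => z.
rewrite [z \in [set _ in W | _]]inE => /andP [zW exz]; rewrite inE exz andbT.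
exact: component_closed_W (component_self _ _ _) zW exz.
Qed.

Lemma component_max_deg y : deg_in e Z x = r i -> y \in Z -> #|[set z in Z | e y z]| <= r i.
Proof.
move=> x_deg yZ; apply: leq_trans (component_deg_in_W x_deg yZ); apply: subset_leq_card.
apply/subsetP => z; rewrite [z \in [set _ in Z | _]]inE => /andP [zZ ezy].
by rewrite inE (component_in (setU11 x _) zZ) ezy.
Qed.

Lemma component_in_class v : v \in Z -> v != x -> exists2 j, f v = Some (i, j) & j < r i.
Proof.
move=> vZ vx; have [i' [j [E jr]]] := pcol_class f_pcol vx.
move: (component_in (setU11 x _) vZ); rewrite in_setU1 (negbTE vx) inE E => /eqP ii.
by exists j; rewrite -ii.
Qed.

Lemma component_uncolorable (g : T -> nat) : (forall v, v \in Z -> g v < r i) ->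
  ~ (forall u v, u \in Z -> v \in Z -> e u v -> g u != g v).
Proof.
move=> g_lt g_proper.
have out_x v : v \notin Z -> v != x by apply: contraNneq => ->; exact: component_self.
have Zout u v : u \in Z -> v \notin Z -> e u v -> class_index r i (g u) != pcol_index r f v.
  move=> uZ vZ euv; have [i' [j' [E jr']]] := pcol_class f_pcol (out_x _ vZ).
  rewrite /pcol_index E; apply: contra vZ => /eqP /(class_index_inj (g_lt _ uZ) jr') [ii _].
  by apply: component_closed_W uZ _ euv; rewrite in_setU1 inE E ii eqxx orbT.
apply: (no_coloring_below_chi chi_eq (c := fun v => if v \in Z then class_index r i (g v)
  else pcol_index r f v)) => [v|u v euv].
  case: ifP => vZ; first exact: class_index_lt (g_lt v vZ).
  exact/(pcol_index_lt f_pcol)/out_x/negbT.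
case uZ: (u \in Z); case vZ: (v \in Z).
- apply: contra (g_proper u v uZ vZ euv) => /eqP.
  by case/(class_index_inj (g_lt u uZ) (g_lt v vZ)) => _ ->.
- exact: Zout uZ (negbT vZ) euv.
- by rewrite eq_sym; apply: Zout vZ (negbT uZ) _; rewrite e_sym.
- case: f_pcol => _ _ _ /(_ u v euv); apply: contra => /eqP.
  by move/(pcol_index_inj f_pcol (out_x u (negbT uZ)) (out_x v (negbT vZ))) ->.
Qed.

Lemma component_almost_coloring :
  almost_coloring e Z (r i) x (fun v => if f v is Some (_, j) then j else 0).
Proof.
split; first exact: component_self.
  by move=> v vZ vx; have [j -> //] := component_in_class vZ vx.
move=> u v uZ vZ ux vx euv.
have [j fu _] := component_in_class uZ ux; have [j' fv _] := component_in_class vZ vx.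
case: f_pcol => _ _ _ /(_ u v euv); rewrite fu fv; apply: contra => /eqP -> //.
Qed.
End MinimalColoring.

Unset Implicit Arguments. Set Strict Implicit. Set Printing Implicit Defensive.

Theorem lemma3p2 (T : finType) (e : rel T) (e_sym : symmetric e) (e_irr : irreflexive e)
  (Hcrit : exists v, critical e v)
  (a : nat) (r : 'I_a -> nat) (a_pos : 0 < a) (r_pos : forall i, 0 < r i)
  (Hsum : 1 + \sum_(i < a) r i = chi e)
  (x : T) (f : T -> option ('I_a * nat)) (Hf : pcol e r x f)
  (Hmin : forall (x' : T) (f' : T -> option ('I_a * nat)),
            pcol e r x' f' -> pcost e f <= pcost e f')
  (i : 'I_a)
  (Hdeg : deg_in e (component e x (x |: Upart f i)) x = r i) :
  (3 <= r i -> complete_on e (component e x (x |: Upart f i))) /\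
  (r i = 2 -> odd_cycle_on e (component e x (x |: Upart f i))).
Proof.
have Zdeg := component_max_deg e_sym e_irr Hsum Hf Hmin Hdeg.
have Zunc := component_uncolorable (i := i) e_sym Hsum Hf.
have Ax := component_almost_coloring i Hf.
have Zconn y := component_connected (e := e) (y := y) (setU11 x (Upart f i)).
split => [r3|r2].
  exact: (almost_coloring_complete e_sym e_irr Zdeg Zunc Ax r3 Zconn).
exact: (almost_coloring_odd_cycle e_sym e_irr Zdeg Zunc Ax r2 Zconn).
Qed.
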